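(* Let $G$ be a simple connected undirected graph with vertex set $V(G)=\{1,2,\ldots,n\}$. Define the coefficient matrix $A$, indexed by pairs $(u,v)$ with $1\le u<v\le n$ and pairs $(i,j)$ with $1\le i<j\le n$, by $A_{(u,v),(i,j)}=1$ if $d(u,i)\neq d(v,i)$ and $d(u,j)\neq d(v,j)$, and $A_{(u,v),(i,j)}=0$ otherwise. For a subset $W\subseteq V(G)$, let $x_k=1$ if $k\in W$ and $x_k=0$ otherwise ($1\le k\le n$), and let $y_{ij}=1$ if $i,j\in W$ and $y_{ij}=0$ otherwise ($1\le i<j\le n$). Then $W$ is a fault-tolerant resolving set of $G$ if and only if the following constraints are satisfied: (a) $\sum_{i=1}^{n-1}\sum_{j=i+1}^{n} A_{(u,v),(i,j)}\,y_{ij}\ge 1$ for all $1\le u<v\le n$; (b) $y_{ij}\le \tfrac12 x_i+\tfrac12 x_j$ for all $1\le i<j\le n$; (c) $y_{ij}\ge x_i+x_j-1$ for all $1\le i<j\le n$; (d) $y_{ij}\in\{0,1\}$ and $x_k\in\{0,1\}$ for all $1\le i<j\le n$, $1\le k\le n$.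
   Context: $d(u,v)$ denotes the length of a shortest $u$–$v$ path in $G$. A vertex $w$ resolves vertices $u,v$ if $d(u,w)\neq d(v,w)$. A set $W\subseteq V(G)$ is a resolving set if every two distinct vertices of $G$ are resolved by some vertex of $W$. A resolving set $W$ is fault-tolerant if $W\setminus\{w\}$ is also a resolving set of $G$ for each $w\in W$. *)

From mathcomp Require Import all_boot all_order all_algebra.
Set Implicit Arguments. Unset Strict Implicit. Unset Printing Implicit Defensive.
Import Order.TTheory GRing.Theory Num.Theory.

Section Graphs.
Variable T : finType.
Variable e : rel T.

Definition simple_graph := symmetric e /\ irreflexive e.
Definition connected_graph := forall u v : T, connect e u v.

Definition walk_of_length (k : nat) (u v : T) : bool :=
  [exists p : k.-tuple T, path e u p && (last u p == v)].

(* d(u,v): the least k (< #|T|) admitting a u-v walk of length k, i.e. the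
   length of a shortest u-v path.  In a connected graph such a k always exists
   (a shortest path has at most #|T|-1 edges); otherwise the value is #|T|. *)
Definition dist (u v : T) : nat :=
  find (fun k => walk_of_length k u v) (iota 0 #|T|).

Definition resolves (w u v : T) : bool := dist u w != dist v w.

Definition resolving_set (W : {set T}) : Prop :=
  forall u v : T, u != v -> exists2 w, w \in W & resolves w u v.

Definition fault_tolerant_resolving_set (W : {set T}) : Prop :=
  resolving_set W /\ forall w, w \in W -> resolving_set (W :\ w).
End Graphs.

Local Open Scope ring_scope.

Definition coefA (n : nat) (e : rel 'I_n) (u v i j : 'I_n) : rat :=
  ((dist e u i != dist e v i) && (dist e u j != dist e v j))%:R.

Definition xvar (n : nat) (W : {set 'I_n}) (k : 'I_n) : rat := (k \in W)%:R.
Definition yvar (n : nat) (W : {set 'I_n}) (i j : 'I_n) : rat :=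
  ((i \in W) && (j \in W))%:R.

(* A set W is fault-tolerant resolving exactly when every pair u != v is
   resolved by two distinct vertices of W: removing one of them leaves the
   other.  The product A_{(u,v),(i,j)} y_{ij} is the indicator that both i and
   j lie in W and resolve u and v, so constraint (a) says precisely that such
   a pair i < j exists.  Constraints (b)-(d) only express that y_{ij} is the
   conjunction of the 0/1 variables x_i and x_j, which holds by construction. *)
From mathcomp Require Import all_boot all_order all_algebra.
From mathcomp Require Import lra.
Set Implicit Arguments. Unset Strict Implicit. Unset Printing Implicit Defensive.
Import Order.TTheory GRing.Theory Num.Theory.
Local Open Scope ring_scope.

Lemma sum_indicator_ge1 (R : numDomainType) (I : finType) (P : pred I)
    (b : I -> bool) :
  (1 <= \sum_(i | P i) (b i)%:R :> R) = [exists i, P i && b i].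
Proof.
rewrite -natr_sum ler1n lt0n sum_nat_eq0 negb_forall.
by apply: eq_existsb => i; case: (P i); case: (b i).
Qed.

Lemma indicator_and_bounds (R : realFieldType) (a b : bool) :
  (a && b)%:R <= 2^-1 * a%:R + 2^-1 * b%:R :> R /\
  a%:R + b%:R - 1 <= (a && b)%:R :> R.
Proof. by case: a; case: b => /=; split; lra. Qed.

Section TwiceResolved.
Variables (T : finType) (e : rel T).

Definition resolved_twice (W : {set T}) (u v : T) : Prop :=
  exists i j, [/\ i \in W, j \in W, i != j, resolves e i u v & resolves e j u v].

Lemma resolvesC (w u v : T) : resolves e w u v = resolves e w v u.
Proof. by rewrite /resolves eq_sym. Qed.

Lemma resolved_twiceC (W : {set T}) (u v : T) :
  resolved_twice W u v -> resolved_twice W v u.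
Proof. by case=> i [j [iW jW ij riuv rjuv]]; exists i, j; rewrite ![resolves e _ v u]resolvesC. Qed.

Lemma fault_tolerant_resolvingP (W : {set T}) :
  fault_tolerant_resolving_set e W <->
  (forall u v, u != v -> resolved_twice W u v).
Proof.
split=> [[resW resWD] u v uv | twice].
  have [i iW riuv] := resW u v uv.
  have [j /setD1P [ji jW] rjuv] := resWD i iW u v uv.
  by exists i, j; rewrite eq_sym in ji.
split=> [u v uv | w wW u v uv].
  by have [i [j [iW _ _ riuv _]]] := twice u v uv; exists i.
have [i [j [iW jW ij riuv rjuv]]] := twice u v uv.
have [-> | wi] := eqVneq w i.
  by exists j => //; rewrite !inE eq_sym ij.
by exists i => //; rewrite !inE eq_sym wi.
Qed.

End TwiceResolved.

Section Ordinals.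
Variables (n : nat) (e : rel 'I_n).

Lemma coefA_yvar (W : {set 'I_n}) (u v i j : 'I_n) :
  coefA e u v i j * yvar W i j =
  [&& i \in W, j \in W, resolves e i u v & resolves e j u v]%:R.
Proof.
rewrite /coefA /yvar /resolves -natrM mulnb.
by case: (i \in W); case: (j \in W); rewrite /= ?andbF ?andbT.
Qed.

Lemma coverage_constraintP (W : {set 'I_n}) (u v : 'I_n) :
  1 <= \sum_(i < n) \sum_(j < n | (i < j)%N) coefA e u v i j * yvar W i j <->
  resolved_twice e W u v.
Proof.
under eq_bigr do under eq_bigr do rewrite coefA_yvar.
rewrite pair_big_dep sum_indicator_ge1; split.
  case/existsP=> -[i j] /= /and3P [ij iW /and3P [jW riuv rjuv]].
  by exists i, j; rewrite iW jW riuv rjuv neq_ltn ij.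
case=> i [j [iW jW ij riuv rjuv]]; apply/existsP.
have [lt_ij | lt_ji | eq_ij] := ltngtP i j.
- by exists (i, j); rewrite /= lt_ij iW jW riuv rjuv.
- by exists (j, i); rewrite /= lt_ji iW jW riuv rjuv.
- by rewrite (val_inj eq_ij) eqxx in ij.
Qed.

Lemma resolved_twice_ltnP (W : {set 'I_n}) :
  (forall u v : 'I_n, u != v -> resolved_twice e W u v) <->
  (forall u v : 'I_n, (u < v)%N -> resolved_twice e W u v).
Proof.
split=> twice u v uv; first by apply: twice; rewrite neq_ltn uv.
have [lt_uv | lt_vu | eq_uv] := ltngtP u v.
- exact: twice.
- exact/resolved_twiceC/twice.
- by rewrite (val_inj eq_uv) eqxx in uv.
Qed.

End Ordinals.

Theorem proposition2p3 (n : nat) (e : rel 'I_n)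
  (Hsimple : simple_graph e) (Hconn : connected_graph e) (W : {set 'I_n}) :
  fault_tolerant_resolving_set e W <->
  [/\ (forall u v : 'I_n, (u < v)%N ->
         1 <= \sum_(i < n) \sum_(j < n | (i < j)%N) coefA e u v i j * yvar W i j),
      (forall i j : 'I_n, (i < j)%N ->
         yvar W i j <= 2^-1 * xvar W i + 2^-1 * xvar W j),
      (forall i j : 'I_n, (i < j)%N ->
         xvar W i + xvar W j - 1 <= yvar W i j) &
      ((forall i j : 'I_n, (i < j)%N -> yvar W i j = 0 \/ yvar W i j = 1) /\
       (forall k : 'I_n, xvar W k = 0 \/ xvar W k = 1))].
Proof.
have coverageP : fault_tolerant_resolving_set e W <->
    forall u v : 'I_n, (u < v)%N ->
      1 <= \sum_(i < n) \sum_(j < n | (i < j)%N) coefA e u v i j * yvar W i j.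
  rewrite fault_tolerant_resolvingP resolved_twice_ltnP.
  by split=> cover u v uv; apply/coverage_constraintP/cover.
rewrite coverageP; split=> [cover | [] //]; split=> //.
- by move=> i j _; case: (indicator_and_bounds rat (i \in W) (j \in W)).
- by move=> i j _; case: (indicator_and_bounds rat (i \in W) (j \in W)).
split=> [i j _ | k]; rewrite /yvar /xvar.
  by case: (_ && _); [right | left].
by case: (_ \in _); [right | left].
Qed.
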